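(* For the uniform-cost inverse fractional knapsack problem under the $l_\infty$-norm (defined in the context), if it has an optimal solution, then there exists an optimal solution $(u,v,\lambda,\mu)$ with $v_i=0$ for all $i\in I^1$ and $u_i=\mu_i=0$ for all $i\in I^0$; i.e., profits of items in $I^1$ are only increased, profits of items in $I^0$ are only reduced, and costs of items in $I^0$ are only increased.
   Context: The fractional knapsack problem with profits $q_i$, costs $d_i$ and budget $b$ is $\max\{\sum_i q_ix_i:\sum_i d_ix_i\le b,\ 0\le x_i\le 1\}$. Given positive integers $p_i,c_i$ ($i=1,\dots,n$), a budget $b$, a vector $x^*\in\{0,1\}^n$, $I^1=\{i:x^*_i=1\}$, $I^0=\{i:x^*_i=0\}$, and nonnegative integer bounds $\bar u_i,\bar v_i,\bar\lambda_i,\bar\mu_i$. A feasible modification is $(u,v,\lambda,\mu)$ with $u_i\in[0,\bar u_i]\cap\mathbb Z$, $v_i\in[0,\bar v_i]\cap\mathbb Z$, $\lambda_i\in[0,\bar\lambda_i]\cap\mathbb Z$, $\mu_i\in[0,\bar\mu_i]\cap\mathbb Z$, giving $\tilde p_i=p_i+u_i-v_i$, $\tilde c_i=c_i+\lambda_i-\mu_i$. The problem asks for a feasible modification such that $x^*$ is an optimal solution of the fractional knapsack problem with profits $\tilde p_i$, costs $\tilde c_i$ and budget $b$, minimizing $\max_{1\le i\le n}\max\{u_i,v_i,\lambda_i,\mu_i\}$. *)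

From HB Require Import structures.
From mathcomp Require Import all_boot all_order all_algebra.
Set Implicit Arguments. Unset Strict Implicit. Unset Printing Implicit Defensive.
Import Order.TTheory GRing.Theory Num.Theory.
Local Open Scope ring_scope.

Section FK.
Variables (R : realFieldType) (n : nat).

Definition fk_feasible (d : 'I_n -> R) (b : R) (x : 'I_n -> R) : Prop :=
  (forall i, 0 <= x i <= 1) /\ \sum_(i < n) d i * x i <= b.

Definition fk_optimal (q d : 'I_n -> R) (b : R) (x : 'I_n -> R) : Prop :=
  fk_feasible d b x /\
  forall y, fk_feasible d b y -> \sum_(i < n) q i * y i <= \sum_(i < n) q i * x i.

Definition bvec (xs : 'I_n -> bool) : 'I_n -> R := fun i => (xs i)%:R.

Definition mod_profit (p : 'I_n -> nat) (u v : 'I_n -> nat) : 'I_n -> R :=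
  fun i => (p i)%:R + (u i)%:R - (v i)%:R.
Definition mod_cost (c : 'I_n -> nat) (l m : 'I_n -> nat) : 'I_n -> R :=
  fun i => (c i)%:R + (l i)%:R - (m i)%:R.

Definition feasible_mod (p c : 'I_n -> nat) (b : R) (xs : 'I_n -> bool)
  (ub vb lb mb : 'I_n -> nat) (u v l m : 'I_n -> nat) : Prop :=
  (forall i, (u i <= ub i)%N /\ (v i <= vb i)%N /\ (l i <= lb i)%N /\ (m i <= mb i)%N)
  /\ fk_optimal (mod_profit p u v) (mod_cost c l m) b (bvec xs).

Definition linf_obj (u v l m : 'I_n -> nat) : nat :=
  \max_(i < n) maxn (maxn (u i) (v i)) (maxn (l i) (m i)).

Definition optimal_mod (p c : 'I_n -> nat) (b : R) (xs : 'I_n -> bool)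
  (ub vb lb mb : 'I_n -> nat) (u v l m : 'I_n -> nat) : Prop :=
  feasible_mod p c b xs ub vb lb mb u v l m /\
  forall u' v' l' m', feasible_mod p c b xs ub vb lb mb u' v' l' m' ->
    (linf_obj u v l m <= linf_obj u' v' l' m')%N.

End FK.

(* Starting from any optimal modification, discard the components that move in
   the "wrong" direction: decreases of profit on I^1, and increases of profit
   and decreases of cost on I^0.  This cannot increase the l_infinity
   objective, and x* stays optimal: raising costs outside the support of x*
   only shrinks the feasible region while keeping x* feasible, and for every
   feasible y the change of profits q' - q satisfies (q' - q)(y - x* ) <= 0
   termwise, so q' y - q' x* <= q y - q x* <= 0. *)

From mathcomp Require Import all_boot all_order all_algebra.
From mathcomp Require Import zify lra.
Set Implicit Arguments. Unset Strict Implicit. Unset Printing Implicit Defensive.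
Import Order.TTheory GRing.Theory Num.Theory.
Local Open Scope ring_scope.

Section FractionalKnapsack.
Variables (R : realFieldType) (n : nat).
Implicit Types (q d : 'I_n -> R) (b : R) (xs : 'I_n -> bool).
Implicit Types (p c f u v l m : 'I_n -> nat).

Lemma fk_feasible_le_cost d d' b x :
  (forall i, d i <= d' i) -> fk_feasible d' b x -> fk_feasible d b x.
Proof.
move=> le_dd' [x01 sum_le]; split=> //; apply: le_trans sum_le.
by apply: ler_sum => i _; case/andP: (x01 i) => x0 _; exact: ler_wpM2r.
Qed.

Lemma fk_optimal_raise_cost q d d' b xs :
  (forall i, d i <= d' i) -> (forall i, xs i -> d' i = d i) ->
  fk_optimal q d b (bvec R xs) -> fk_optimal q d' b (bvec R xs).
Proof.
move=> le_dd' eq_dd' [[x01 x_le_b] x_opt]; split; last first.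
  by move=> y /(fk_feasible_le_cost le_dd'); exact: x_opt.
split=> //; rewrite (eq_bigr (fun i => d i * bvec R xs i)) // => i _.
by rewrite /bvec; case: (boolP (xs i)) => [/eq_dd' -> | _]; rewrite ?mulr0.
Qed.

Lemma fk_optimal_tilt_profit q q' d b xs :
  (forall i, xs i -> q i <= q' i) -> (forall i, ~~ xs i -> q' i <= q i) ->
  fk_optimal q d b (bvec R xs) -> fk_optimal q' d b (bvec R xs).
Proof.
move=> q_up q_down [x_feas x_opt]; split=> // y y_feas.
have gain_le : \sum_i q' i * y i - \sum_i q' i * bvec R xs i
            <= \sum_i q i * y i - \sum_i q i * bvec R xs i.
  rewrite -!sumrB; apply: ler_sum => i _.
  case/andP: (y_feas.1 i) => y0 y1; rewrite /bvec.
  case: (boolP (xs i)) => [xi | nxi] /=.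
    by have := q_up i xi; nra.
  by have := q_down i nxi; nra.
by rewrite -subr_le0; apply: le_trans gain_le _; rewrite subr_le0; exact: x_opt.
Qed.

Lemma mod_profit_le p u v u' v' i :
  (u i <= u' i)%N -> (v' i <= v i)%N ->
  mod_profit R p u v i <= mod_profit R p u' v' i.
Proof. by rewrite /mod_profit -!(ler_nat R) => le_u le_v; lra. Qed.

Lemma mod_cost_le c l m m' i :
  (m' i <= m i)%N -> mod_cost R c l m i <= mod_cost R c l m' i.
Proof. by rewrite /mod_cost -(ler_nat R) => le_m; lra. Qed.

Definition keep_on (P : pred 'I_n) (f : 'I_n -> nat) i :=
  if P i then f i else 0%N.

Lemma keep_on_le P f i : (keep_on P f i <= f i)%N.
Proof. by rewrite /keep_on; case: (P i). Qed.

Lemma linf_obj_le u v l m u' v' l' m' :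
  (forall i, u' i <= u i)%N -> (forall i, v' i <= v i)%N ->
  (forall i, l' i <= l i)%N -> (forall i, m' i <= m i)%N ->
  (linf_obj u' v' l' m' <= linf_obj u v l m)%N.
Proof.
move=> le_u le_v le_l le_m; apply/bigmax_leqP => i _.
apply: leq_trans (leq_bigmax i).
by have := le_u i; have := le_v i; have := le_l i; have := le_m i; lia.
Qed.

Variables (p c : 'I_n -> nat) (b : R) (xs : 'I_n -> bool).
Variables (ub vb lb mb : 'I_n -> nat).

Lemma optimal_mod_le_obj u v l m u' v' l' m' :
  optimal_mod p c b xs ub vb lb mb u v l m ->
  feasible_mod p c b xs ub vb lb mb u' v' l' m' ->
  (linf_obj u' v' l' m' <= linf_obj u v l m)%N ->
  optimal_mod p c b xs ub vb lb mb u' v' l' m'.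
Proof.
move=> [_ min_obj] feas' le_obj; split=> // u2 v2 l2 m2 feas2.
exact: leq_trans le_obj (min_obj _ _ _ _ feas2).
Qed.

Lemma feasible_mod_keep_on u v l m :
  feasible_mod p c b xs ub vb lb mb u v l m ->
  feasible_mod p c b xs ub vb lb mb
    (keep_on xs u) (keep_on (predC xs) v) l (keep_on xs m).
Proof.
move=> [bounds x_opt]; split.
  move=> i; have [ub_u [vb_v [lb_l mb_m]]] := bounds i.
  by split; [|split; [|split]] => //; apply: leq_trans (keep_on_le _ _ _) _.
apply: fk_optimal_raise_cost.
- by move=> i; apply: mod_cost_le; exact: keep_on_le.
- by move=> i xi; rewrite /mod_cost /keep_on xi.
apply: fk_optimal_tilt_profit x_opt.
- by move=> i xi; apply: mod_profit_le; rewrite /keep_on /= xi.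
- by move=> i nxi; apply: mod_profit_le; rewrite /keep_on /= (negbTE nxi).
Qed.

End FractionalKnapsack.

Theorem mainTheorem5 (R : realFieldType) (n : nat)
  (p c : 'I_n -> nat) (b : nat) (xs : 'I_n -> bool)
  (ub vb lb mb : 'I_n -> nat) :
  (forall i, (0 < p i)%N) -> (forall i, (0 < c i)%N) ->
  (exists u v l m, @optimal_mod R n p c b%:R xs ub vb lb mb u v l m) ->
  exists u v l m, @optimal_mod R n p c b%:R xs ub vb lb mb u v l m /\
    (forall i, xs i -> v i = 0%N) /\
    (forall i, ~~ xs i -> u i = 0%N /\ m i = 0%N).
Proof.
move=> _ _ [u [v [l [m opt]]]].
exists (keep_on xs u), (keep_on (predC xs) v), l, (keep_on xs m); split.
  apply: optimal_mod_le_obj opt (feasible_mod_keep_on opt.1) _.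
  by apply: linf_obj_le => // i; exact: keep_on_le.
by split=> i; rewrite /keep_on /=; [move=> -> | move/negbTE ->].
Qed.
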